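(* For any integer $d\ge 841$ there exists a polynomial $f\in\mathbb{Z}[x]$ of degree at most $d\log d$ and height $H(f)\le\exp(2d\log d)$ whose minimal-degree binomial multiple $x^m-a$ (with $a\in\mathbb{Q}$) satisfies $m>\exp(\sqrt d)$ and $H(a)>2^{\exp(\sqrt d)}$.
   Context: $\log$ denotes the natural logarithm. A binomial multiple of $f$ is a multiple of $f$ in $\mathbb{Q}[x]$ of the form $x^m-a$ with $m\ge1$ and $a\in\mathbb{Q}$. Height of a polynomial: for nonzero $f\in\mathbb{Q}[x]$, let $r$ be the least positive rational with $rf\in\mathbb{Z}[x]$; if $rf=\sum_i a_ix^{e_i}$ with $a_i\in\mathbb{Z}$, then $H(f)=\max_i|a_i|$. For a nonzero rational number $a=p/q$ in lowest terms, $H(a)=\max(|p|,|q|)$. *)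

From Stdlib Require Import Reals.
From mathcomp Require Import all_boot all_order all_algebra.

Set Implicit Arguments.
Unset Strict Implicit.
Unset Printing Implicit Defensive.

Import Order.TTheory GRing.Theory Num.Theory.

Local Open Scope ring_scope.

(* Height of a nonzero f in Z[x], following the paper: scale f by the least
   positive rational r with r f in Z[x] (i.e. divide by the content), then take
   the maximum absolute value of the coefficients.  zprimitive f is f divided by
   its (signed) content; the sign does not affect absolute values. *)
Definition polyHeight (f : {poly int}) : nat :=
  \max_(i < size f) absz ((zprimitive f)`_i)%R.

Definition ratHeight (a : rat) : nat := maxn (absz (numq a)) (absz (denq a)).

Definition is_binomial_multiple (f : {poly int}) (m : nat) (a : rat) : Prop :=
  (0 < m)%N /\ (map_poly (intr : int -> rat) f %| 'X^m - a%:P).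

Definition is_min_binomial_multiple (f : {poly int}) (m : nat) (a : rat) : Prop :=
  is_binomial_multiple f m a /\
  (forall (m' : nat) (a' : rat), is_binomial_multiple f m' a' -> (m <= m')%N).

Local Close Scope ring_scope.
Local Open Scope R_scope.

Definition dlogd (d : nat) : R := INR d * ln (INR d).
Definition expsqrt (d : nat) : R := exp (sqrt (INR d)).

From Stdlib Require Import Reals Lra Lia.
From mathcomp Require Import all_boot all_order all_algebra algC cyclotomic.
From mathcomp Require Import ring zify.

(* Take f(x) = Phi_1(2x) Phi_2(2x) ... Phi_N(2x) with N = 2k + 1 and
   k = floor(sqrt d) + 1.  Its roots are the zeta/2 with zeta a primitive
   e-th root of unity, e <= N, so x^m - a is a multiple of f exactly when
   lcm(1, ..., N) divides m and a = 2^-m.  The minimal binomial multiple thus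
   has m = lcm(1, ..., N) >= 4^k > exp(sqrt d) (Nair's bound) and H(a) = 2^m.
   Over C, Phi_1 ... Phi_N is a product of at most N^2 linear factors with
   roots of modulus 1, so its coefficients are bounded by binomial
   coefficients, hence by 2^(N^2); the substitution x -> 2x costs another
   factor 2^(N^2), and N^2 <= 5d <= d log d. *)

Set Implicit Arguments.
Unset Strict Implicit.
Unset Printing Implicit Defensive.

Import Order.TTheory GRing.Theory Num.Theory.

Local Open Scope ring_scope.

Definition alt_binom_sum (k n : nat) : rat :=
  \sum_(j < k.+1) (-1) ^+ j * 'C(k, j)%:R / (n + j)%:R.

(* The Beta integral B(n, k + 1); expanding (1 - x)^k under the integral
   gives [alt_binom_sum k n]. *)
Definition beta_nat (k n : nat) : rat := k`!%:R / \prod_(j < k.+1) (n + j)%:R.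

Lemma alt_binom_sumS k n :
  alt_binom_sum k.+1 n = alt_binom_sum k n - alt_binom_sum k n.+1.
Proof.
rewrite /alt_binom_sum big_ord_recl [X in _ = X - _]big_ord_recl /=.
rewrite !expr0 !bin0 !mul1r !addn0.
have -> : \sum_(i < k.+1) (-1) ^+ bump 0 i * 'C(k.+1, bump 0 i)%:R / (n + bump 0 i)%:R
   = \sum_(i < k.+1) (-1) ^+ i.+1 * 'C(k, i.+1)%:R / (n + i.+1)%:R
     - \sum_(i < k.+1) (-1) ^+ i * 'C(k, i)%:R / (n.+1 + i)%:R :> rat.
  rewrite -sumrB; apply: eq_bigr => j _.
  rewrite /bump /= add1n binS natrD exprS addnS addSn.
  by rewrite !mulrDr !mulrDl mulN1r; ring.
by rewrite big_ord_recr /= bin_small // mulr0 mul0r addr0 addrA.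
Qed.

Lemma beta_natS k n : (0 < n)%N -> beta_nat k.+1 n = beta_nat k n - beta_nat k n.+1.
Proof.
move=> n_gt0; rewrite /beta_nat.
set Q := \prod_(j < k) (n.+1 + j)%:R : rat.
have prod_k1 : \prod_(j < k.+1) (n + j)%:R = n%:R * Q :> rat.
  by rewrite big_ord_recl addn0; congr (_ * _); apply: eq_bigr => j _; rewrite addnS.
have prod_k1S : \prod_(j < k.+1) (n.+1 + j)%:R = Q * (n + k.+1)%:R :> rat.
  by rewrite big_ord_recr /= addSnnS.
have prod_k2 : \prod_(j < k.+2) (n + j)%:R = n%:R * (Q * (n + k.+1)%:R) :> rat.
  rewrite big_ord_recl addn0 -prod_k1S; congr (_ * _).
  by apply: eq_bigr => j _; rewrite addnS.
have Q_neq0 : Q != 0 by rewrite prodf_seq_neq0; apply/allP => j _; rewrite pnatr_eq0.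
have n_neq0 : n%:R != 0 :> rat by rewrite pnatr_eq0 -lt0n.
have nk_neq0 : n%:R + (1 + k%:R) != 0 :> rat.
  by rewrite -mulrS -natrD pnatr_eq0 addnS.
rewrite prod_k1 prod_k1S prod_k2 factS natrM; field.
by rewrite Q_neq0 n_neq0 nk_neq0.
Qed.

Lemma alt_binom_sum_beta k n : (0 < n)%N -> alt_binom_sum k n = beta_nat k n.
Proof.
elim: k n => [|k IHk] n n_gt0.
  by rewrite /alt_binom_sum /beta_nat !big_ord1 expr0 bin0 mul1r fact0.
by rewrite alt_binom_sumS beta_natS // !IHk.
Qed.

Lemma expn4_fact_sqr_leq k : (4 ^ k * (k`! * k`!) <= (k.*2.+1)`!)%N.
Proof.
elim: k => [|k IHk] //; rewrite doubleS !factS.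
have -> : (4 ^ k.+1 * ((k.+1 * k`!) * (k.+1 * k`!))
           = (4 * (k.+1 * k.+1)) * (4 ^ k * (k`! * k`!)))%N by rewrite expnS; ring.
have le4 : (4 * (k.+1 * k.+1) <= k.*2.+3 * k.*2.+2)%N by nia.
by apply: leq_trans (leq_mul le4 IHk) _; rewrite -(factS k.*2) mulnA.
Qed.

(* [m * alt_binom_sum k k.+1] is a positive integer, since every [k.+1 + j]
   divides [m], and it equals [m * k`!^2 / (k.*2.+1)`!]. *)
Lemma nair_bound k m : (0 < m)%N ->
  (forall j, (0 < j <= k.*2.+1)%N -> (j %| m)%N) -> (4 ^ k <= m)%N.
Proof.
move=> m_gt0 dvd_m.
pose z : int := \sum_(j < k.+1) (-1) ^+ j * ('C(k, j) * (m %/ (k.+1 + j)))%:Z.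
have mS_int : m%:R * alt_binom_sum k k.+1 = z%:~R.
  rewrite /alt_binom_sum /z mulr_sumr rmorph_sum /=; apply: eq_bigr => j _.
  have dvd_kj : (k.+1 + j %| m)%N by apply: dvd_m; have := ltn_ord j; lia.
  rewrite rmorphM /= rmorphXn /= rmorphN1 -pmulrn -{1}(divnK dvd_kj) !natrM.
  have kj_neq0 : (k.+1 + j)%:R != 0 :> rat by rewrite pnatr_eq0 addSn.
  by rewrite mulrAC -mulrA divfK // mulrC -mulrA.
have prod_pos : 0 < \prod_(j < k.+1) (k.+1 + j)%:R :> rat.
  by rewrite prodr_gt0 // => j _; rewrite ltr0n addSn.
have fact_pos : 0 < k`!%:R :> rat by rewrite ltr0n fact_gt0.
have mS_ge1 : 1 <= m%:R * alt_binom_sum k k.+1.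
  have : 0 < m%:R * alt_binom_sum k k.+1.
    by rewrite alt_binom_sum_beta // mulr_gt0 ?ltr0n // divr_gt0.
  by rewrite mS_int ler1z ltr0z; lia.
have prod_fact : \prod_(j < k.+1) (k.+1 + j)%:R * k`!%:R = (k.*2.+1)`!%:R :> rat.
  have le_k : (k <= k.*2.+1)%N by rewrite -addnn; lia.
  rewrite (fact_split le_k) natrM mulrC; congr (_ * _).
  rewrite natr_prod (@big_addn _ _ _ 0 _ k.+1) big_mkord.
  have -> : (k.*2.+2 - k.+1 = k.+1)%N by rewrite -addnn; lia.
  by apply: eq_bigr => i _; rewrite addnC.
move: mS_ge1; rewrite alt_binom_sum_beta // /beta_nat mulrA ler_pdivlMr // mul1r.
move=> fact2_le.
have : (4 ^ k * (k`! * k`!))%:R <= (m * k`! * k`!)%:R :> rat.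
  apply: le_trans (_ : _ <= (k.*2.+1)`!%:R) _.
    by rewrite ler_nat expn4_fact_sqr_leq.
  by rewrite -prod_fact !natrM ler_pM2r.
by rewrite ler_nat -mulnA leq_pmul2r // muln_gt0 fact_gt0.
Qed.

Section BinomDominated.

Variable R : numDomainType.

Definition binom_dominated (p : {poly R}) (n : nat) :=
  (size p <= n.+1)%N /\ forall i, `|p`_i| <= 'C(n, i)%:R.

Lemma binom_dominated1 : binom_dominated 1 0.
Proof.
split; first by rewrite size_poly1.
by case=> [|i]; rewrite coef1 ?bin0 ?normr1 // normr0 bin0n.
Qed.

Lemma binom_dominated_mulXsubC p n r :
  `|r| <= 1 -> binom_dominated p n -> binom_dominated (p * ('X - r%:P)) n.+1.
Proof.
move=> r_le1 [size_p coef_p]; split.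
  by apply: leq_trans (size_polyMleq _ _) _; rewrite size_XsubC addn2.
move=> i; rewrite mulrBr coefB coefMX coefMC.
case: i => [|i] /=.
  rewrite sub0r normrN normrM bin0 -[1](mulr1 1).
  by rewrite ler_pM // (le_trans (coef_p 0%N)) // bin0.
rewrite binS natrD (le_trans (ler_normB _ _)) // addrC lerD // normrM.
by rewrite -[_%:R]mulr1 ler_pM.
Qed.

Lemma binom_dominated_mul_prodXsubC (I : Type) (s : seq I) (P : pred I)
    (g : I -> R) p n :
  (forall i, `|g i| <= 1) -> binom_dominated p n ->
  binom_dominated (p * \prod_(i <- s | P i) ('X - (g i)%:P)) (n + count P s).
Proof.
move=> g_le1; elim: s p n => [|x s IHs] p n dom_p /=.
  by rewrite big_nil mulr1 addn0.
rewrite big_cons; case: (P x) => /=; last by rewrite add0n; apply: IHs.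
by rewrite mulrA addnA addn1; apply/IHs/binom_dominated_mulXsubC.
Qed.

End BinomDominated.

Lemma bin_leq_expn2 n i : ('C(n, i) <= 2 ^ n)%N.
Proof.
elim: n i => [|n IHn] [|i]; rewrite ?bin0 ?expn_gt0 ?bin0n //.
by rewrite binS expnS mul2n -addnn leq_add.
Qed.

Definition zeta (d : nat) : algC := sval (C_prim_root_exists (ltn0Sn d.-1)).

Lemma zeta_prim d : (0 < d)%N -> d.-primitive_root (zeta d).
Proof.
by move=> d_gt0; rewrite /zeta; case: C_prim_root_exists => z /=; rewrite prednK.
Qed.

Lemma norm_zetaX d k : (0 < d)%N -> `|zeta d ^+ k| = 1.
Proof.
move=> d_gt0; have zeta_d := zeta_prim d_gt0.
have : `|zeta d| ^+ d == 1 by rewrite -normrX prim_expr_order // normr1.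
by rewrite normrX pexpr_eq1 // => /eqP ->; rewrite expr1n.
Qed.

Definition cycprod (N : nat) : {poly int} := \prod_(d <- iota 1 N) 'Phi_d.

Lemma cycprod_monic N : cycprod N \is monic.
Proof. by apply: monic_prod => d _; apply: Cyclotomic_monic. Qed.

Lemma map_cycprod N :
  map_poly intr (cycprod N)
  = \prod_(d <- iota 1 N) cyclotomic (zeta d) d :> {poly algC}.
Proof.
rewrite rmorph_prod; apply: eq_big_seq => d; rewrite mem_iota => /andP[d_gt0 _].
exact: Cintr_Cyclotomic (zeta_prim d_gt0).
Qed.

Lemma root_cycprod N d :
  (0 < d <= N)%N -> root (map_poly intr (cycprod N) : {poly algC}) (zeta d).
Proof.
move=> /andP[d_gt0 le_dN]; have d_in : d \in iota 1 N by rewrite mem_iota; lia.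
rewrite map_cycprod (big_rem d d_in) rootM.
by rewrite (root_cyclotomic (zeta_prim d_gt0)) zeta_prim.
Qed.

Lemma binom_dominated_prod_cyclotomic (l : seq nat) N :
  (forall d, d \in l -> 0 < d <= N)%N ->
  exists2 n, (n <= size l * N)%N &
    binom_dominated (\prod_(d <- l) cyclotomic (zeta d) d) n.
Proof.
elim: l => [|d l IHl] l_range.
  by exists 0%N; rewrite // big_nil; apply: binom_dominated1.
have [n le_n dom_n] : exists2 n, (n <= size l * N)%N &
    binom_dominated (\prod_(d <- l) cyclotomic (zeta d) d) n.
  by apply: IHl => e e_in; apply: l_range; rewrite inE e_in orbT.
have /andP[d_gt0 le_dN] : (0 < d <= N)%N by apply: l_range; rewrite inE eqxx.
exists (n + count (fun k : 'I_d => coprime k d) (index_enum 'I_d))%N.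
  rewrite mulSn addnC leq_add //; apply: leq_trans (count_size _ _) _.
  by rewrite /index_enum -enumT size_enum_ord.
rewrite big_cons mulrC /cyclotomic.
by apply: binom_dominated_mul_prodXsubC => // k; rewrite norm_zetaX.
Qed.

Lemma cycprod_coef_bound N : exists2 n, (n <= N * N)%N &
  (size (cycprod N) <= n.+1)%N /\ forall i, (absz ((cycprod N)`_i)%R <= 2 ^ n)%N.
Proof.
have [n le_n [size_n coef_n]] : exists2 n, (n <= size (iota 1 N) * N)%N &
    binom_dominated (\prod_(d <- iota 1 N) cyclotomic (zeta d) d) n.
  by apply: binom_dominated_prod_cyclotomic => d; rewrite mem_iota; lia.
rewrite size_iota in le_n; exists n => //; rewrite -map_cycprod in size_n coef_n.
split; first by rewrite size_map_inj_poly // in size_n; apply: intr_inj.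
move=> i; apply: leq_trans (bin_leq_expn2 n i).
by have := coef_n i; rewrite coef_map /= -intr_norm -natr_absz ler_nat.
Qed.

Lemma cycprod_dvd_XnsubC N m : (0 < m)%N ->
  (forall d, (0 < d <= N)%N -> (d %| m)%N) ->
  exists q : {poly int}, 'X^m - 1 = cycprod N * q.
Proof.
move=> m_gt0 dvd_m; rewrite -prod_Cyclotomic // (bigID (fun d => (d <= N)%N)) /=.
eexists; congr (_ * _); rewrite -big_filter /cycprod; congr bigop.bigop.
apply: (irr_sorted_eq ltn_trans ltnn).
- by apply: sorted_filter; [apply: ltn_trans | apply: sorted_divisors_ltn].
- exact: iota_ltn_sorted.
move=> d; rewrite mem_filter mem_iota -dvdn_divisors //.
case: d => [|d]; first by rewrite dvd0n gtn_eqF.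
by case: (leqP d.+1 N) => [le_dN|] /=; [rewrite dvd_m // le_dN | lia].
Qed.

Lemma coef_comp_scaleX (R : comNzRingType) (p : {poly R}) (c : R) i :
  (p \Po (c *: 'X))`_i = p`_i * c ^+ i.
Proof.
rewrite comp_polyE coef_sum.
under eq_bigr => j _ do rewrite exprZn scalerA coefZ coefXn.
have [lt_ip | le_pi] := ltnP i (size p).
  rewrite (bigD1 (Ordinal lt_ip)) //= eqxx mulr1 big1 ?addr0 // => j ne_ji.
  suff /negbTE -> : i != j by rewrite mulr0.
  by apply: contraNneq ne_ji => eq_ij; rewrite -val_eqE /= eq_ij.
rewrite (nth_default 0 le_pi) mul0r big1 // => j _.
by rewrite gtn_eqF ?mulr0 // (leq_trans (ltn_ord j) le_pi).
Qed.

Lemma polyHeight_leq (p : {poly int}) B : p != 0 ->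
  (forall i, (absz (p`_i)%R <= B)%N) -> (polyHeight p <= B)%N.
Proof.
move=> p_neq0 coef_le; apply/bigmax_leqP => i _.
have c_neq0 : zcontents p != 0 by rewrite zcontents_eq0.
apply: leq_trans (coef_le i).
have := congr1 (fun q : {poly int} => absz q`_i) (zpolyEprim p).
rewrite /= coefZ abszM => ->.
by rewrite -{1}[absz _]mul1n leq_mul2r absz_gt0 c_neq0 orbT.
Qed.

Definition scaled_cycprod (N : nat) : {poly int} := cycprod N \Po (2%:Z *: 'X).

Lemma size_scaled_cycprod N : size (scaled_cycprod N) = size (cycprod N).
Proof. by rewrite size_comp_poly2 // size_scale ?size_polyX. Qed.

Lemma scaled_cycprod_neq0 N : scaled_cycprod N != 0.
Proof.
by rewrite -size_poly_eq0 size_scaled_cycprod size_poly_eq0 monic_neq0 ?cycprod_monic.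
Qed.

Lemma scaled_cycprod_size_height N : exists2 n, (n <= N * N)%N &
  ((size (scaled_cycprod N)).-1 <= n)%N /\ (polyHeight (scaled_cycprod N) <= 4 ^ n)%N.
Proof.
have [n le_n [size_n coef_n]] := cycprod_coef_bound N.
exists n => //; rewrite size_scaled_cycprod; split; first by move: size_n; lia.
apply: polyHeight_leq (scaled_cycprod_neq0 N) _ => i.
have [le_in | lt_ni] := leqP i n; last first.
  by rewrite nth_default // size_scaled_cycprod (leq_trans size_n lt_ni).
rewrite coef_comp_scaleX abszM abszX (_ : 4 = 2 * 2)%N // expnMn.
by rewrite leq_mul ?leq_pexp2l.
Qed.

Definition lcm_iota (N : nat) : nat := \big[lcmn/1%N]_(i < N) i.+1.

Lemma lcm_iotaP N m :
  reflect (forall d, (0 < d <= N)%N -> (d %| m)%N) (lcm_iota N %| m)%N.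
Proof.
apply: (iffP (dvdn_biglcmP xpredT (fun i : 'I_N => i.+1) m)) => [dvd_m d | dvd_m i _].
  case/andP=> d_gt0 le_dN; have lt_d1N : (d.-1 < N)%N by lia.
  by have := dvd_m (Ordinal lt_d1N) isT; rewrite /= prednK.
by apply: dvd_m; rewrite ltn_ord.
Qed.

Lemma lcm_iota_gt0 N : (0 < lcm_iota N)%N.
Proof.
apply: dvdn_gt0 (fact_gt0 N) _; apply/lcm_iotaP => d /andP[d_gt0 le_dN].
by rewrite dvdn_fact ?d_gt0.
Qed.

Lemma map_scaled_cycprod (R : comNzRingType) N :
  map_poly (intr : int -> R) (scaled_cycprod N)
  = map_poly intr (cycprod N) \Po (2 *: 'X).
Proof. by rewrite map_comp_poly map_polyZ /= map_polyX. Qed.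

Lemma scaled_cycprod_binomial_multiple N m : (0 < m)%N -> (lcm_iota N %| m)%N ->
  is_binomial_multiple (scaled_cycprod N) m (2^-1 ^+ m).
Proof.
move=> m_gt0 /lcm_iotaP dvd_m; split=> //.
have [q eq_q] := cycprod_dvd_XnsubC m_gt0 dvd_m.
have := congr1 (fun p => map_poly (intr : int -> rat) p \Po (2 *: 'X)) eq_q.
rewrite /= rmorphM /= comp_polyM -map_scaled_cycprod rmorphB /= map_polyXn rmorph1.
rewrite comp_polyB comp_Xn_poly comp_polyC exprZn => eq_scaled.
have -> : 'X^m - (2^-1 ^+ m)%:P = 2^-1 ^+ m *: (2 ^+ m *: 'X^m - 1) :> {poly rat}.
  by rewrite scalerBr scalerA -exprMn mulVf ?expr1n ?scale1r // alg_polyC.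
by rewrite dvdpZr ?expf_neq0 ?invr_eq0 // -polyC1 eq_scaled dvdp_mulr.
Qed.

Lemma binomial_multiple_scaled_cycprod N m a : (0 < N)%N ->
  is_binomial_multiple (scaled_cycprod N) m a -> (lcm_iota N %| m)%N /\ a = 2^-1 ^+ m.
Proof.
move=> N_gt0 [m_gt0 dvd_f].
have dvd_C : map_poly (intr : int -> algC) (scaled_cycprod N) %| 'X^m - (ratr a)%:P.
  rewrite -(dvdp_map (@ratr algC)) rmorphB /= map_polyXn map_polyC /= in dvd_f.
  by rewrite -map_poly_comp (eq_map_poly (ratr_int _)) in dvd_f.
have zeta_halfX d : (0 < d <= N)%N -> (zeta d / 2) ^+ m = ratr a.
  move=> d_range; have : root (map_poly intr (scaled_cycprod N)) (zeta d / 2).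
    rewrite map_scaled_cycprod root_comp hornerZ hornerX mulrCA divff ?mulr1.
      exact: root_cycprod.
    by rewrite pnatr_eq0.
  by move/(root_dvdp dvd_C)/rootP/eqP; rewrite !hornerE subr_eq0 => /eqP.
have zeta1 : zeta 1 = 1 by rewrite -[zeta 1]expr1 prim_expr_order // zeta_prim.
have a_halfX : ratr a = 2^-1 ^+ m :> algC by rewrite -(zeta_halfX 1%N) ?zeta1 ?mul1r.
split.
  apply/lcm_iotaP => d d_range; have /andP[d_gt0 _] := d_range.
  have half_neq0 : 2^-1 ^+ m != 0 :> algC by rewrite expf_neq0 // invr_eq0 pnatr_eq0.
  have : zeta d ^+ m * 2^-1 ^+ m = 1 * 2^-1 ^+ m.
    by rewrite -exprMn mul1r -a_halfX zeta_halfX.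
  by move/(mulIf half_neq0)/eqP; rewrite -(prim_order_dvd (zeta_prim d_gt0)).
apply: (fmorph_inj (@ratr algC)); apply: etrans a_halfX _.
by rewrite rmorphXn fmorphV rmorph_nat.
Qed.

Lemma scaled_cycprod_min_binomial_multiple N : (0 < N)%N ->
  is_min_binomial_multiple (scaled_cycprod N) (lcm_iota N) (2^-1 ^+ lcm_iota N).
Proof.
move=> N_gt0; split.
  exact: scaled_cycprod_binomial_multiple (lcm_iota_gt0 N) (dvdnn _).
move=> m a bin_ma; have [dvd_m _] := binomial_multiple_scaled_cycprod N_gt0 bin_ma.
by apply: dvdn_leq dvd_m; case: bin_ma.
Qed.

Lemma ratHeight_halfX m : (2 ^ m <= ratHeight (2^-1 ^+ m))%N.
Proof.
have -> : 2^-1 ^+ m = ((2 ^ m)%N%:Z%:~R)^-1 :> rat by rewrite exprVn -natrX.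
by rewrite /ratHeight denqVz ?eqz_nat ?expn_eq0 ?leq_maxr.
Qed.

Local Close Scope ring_scope.
Local Open Scope R_scope.

Lemma INR_leq a b : (a <= b)%N -> INR a <= INR b.
Proof. by move/ssrnat.leP; apply: le_INR. Qed.

Lemma INR_expn a b : INR (a ^ b)%N = INR a ^ b.
Proof. by elim: b => [|b IHb] //; rewrite expnS -multE mult_INR IHb. Qed.

Lemma exp_mulINR n x : exp (INR n * x) = exp x ^ n.
Proof.
elim: n => [|n IHn]; first by rewrite Rmult_0_l exp_0.
by rewrite S_INR Rmult_plus_distr_r Rmult_1_l exp_plus IHn /= Rmult_comm.
Qed.

Lemma exp_le x y : x <= y -> exp x <= exp y.
Proof. by case=> [/exp_increasing/Rlt_le | ->]; [| apply: Rle_refl]. Qed.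

Lemma four_le_exp2 : 4 <= exp 2.
Proof.
have e1_gt2 : 1 + 1 < exp 1 by apply: exp_ineq1; lra.
by rewrite (_ : 2 = 1 + 1) ?exp_plus; [nra | lra].
Qed.

Lemma expn4_le_exp2 x n : INR n <= x -> INR (4 ^ n) <= exp (2 * x).
Proof.
move=> le_nx; apply: Rle_trans (exp_le (_ : INR n * 2 <= 2 * x)); last by lra.
rewrite INR_expn exp_mulINR; apply: pow_incr; split; first by simpl; lra.
by have := four_le_exp2; simpl; lra.
Qed.

Lemma exp_INR_le_pow3 n : exp (INR n) <= 3 ^ n.
Proof.
rewrite -[INR n]Rmult_1_r exp_mulINR; apply: pow_incr.
by split; [apply/Rlt_le/exp_pos | apply: exp_le_3].
Qed.

Lemma expsqrt_lt_expn4 d : expsqrt d < INR (4 ^ (Nat.sqrt d).+1).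
Proof.
set k := (Nat.sqrt d).+1.
have sqrt_lt_k : sqrt (INR d) < INR k.
  rewrite -(sqrt_square (INR k)); last exact: pos_INR.
  apply: sqrt_lt_1_alt; split; first exact: pos_INR.
  by rewrite -mult_INR; apply: lt_INR; have := Nat.sqrt_spec d (Nat.le_0_l d); lia.
apply: Rlt_le_trans (exp_increasing _ _ sqrt_lt_k) _.
apply: Rle_trans (exp_INR_le_pow3 k) _.
by rewrite INR_expn; apply: pow_incr; simpl; lra.
Qed.

Lemma Rpower2_lt_expn2 x m : x < INR m -> Rpower 2 x < INR (2 ^ m).
Proof.
move=> lt_xm; rewrite INR_expn -Rpower_pow; last by simpl; lra.
by apply: Rpower_lt; first by simpl; lra.
Qed.

Lemma five_le_ln x : 243 <= x -> 5 <= ln x.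
Proof.
move=> le_x; apply: Rnot_lt_le => /exp_increasing.
rewrite exp_ln => [lt_x|]; last by lra.
have exp5_le : exp 5 <= 3 ^ 5.
  by rewrite (_ : 5 = INR 5); [apply: exp_INR_le_pow3 | simpl; lra].
simpl in exp5_le; lra.
Qed.

Lemma odd_sqr_le_dlogd d : (841 <= d)%N ->
  INR ((Nat.sqrt d).+1.*2.+1 * (Nat.sqrt d).+1.*2.+1) <= dlogd d.
Proof.
move=> le_d; have [le_sd lt_ds] := Nat.sqrt_spec d (Nat.le_0_l d).
have sqrt_ge29 : (29 <= Nat.sqrt d)%N by nia.
have le_5d : ((Nat.sqrt d).+1.*2.+1 * (Nat.sqrt d).+1.*2.+1 <= 5 * d)%N by nia.
have d_ge841 : 841 <= INR d by have := INR_leq le_d; simpl; lra.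
have ln_ge5 : 5 <= ln (INR d) by apply: five_le_ln; lra.
apply: Rle_trans (INR_leq le_5d) _; rewrite -multE mult_INR /dlogd /=; nra.
Qed.

Theorem theorem3p7 :
  forall d : nat, (841 <= d)%N ->
  exists f : {poly int},
    f != 0%R /\
    Rle (INR (size f).-1) (dlogd d) /\
    Rle (INR (polyHeight f)) (exp (Rmult 2 (dlogd d))) /\
    exists (m : nat) (a : rat),
      is_min_binomial_multiple f m a /\
      Rlt (expsqrt d) (INR m) /\
      Rlt (Rpower 2 (expsqrt d)) (INR (ratHeight a)).
Proof.
move=> d le_d; set k := (Nat.sqrt d).+1; set N := k.*2.+1.
exists (scaled_cycprod N); split; first exact: scaled_cycprod_neq0.
have [n le_nN [size_n height_n]] := scaled_cycprod_size_height N.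
have n_le : INR n <= dlogd d.
  by apply: Rle_trans (INR_leq le_nN) (odd_sqr_le_dlogd le_d).
split; first by apply: Rle_trans (INR_leq size_n) n_le.
split; first by apply: Rle_trans (INR_leq height_n) (expn4_le_exp2 n_le).
exists (lcm_iota N), (2^-1 ^+ lcm_iota N)%R.
split; first exact: scaled_cycprod_min_binomial_multiple.
have lcm_gt : expsqrt d < INR (lcm_iota N).
  apply: Rlt_le_trans (expsqrt_lt_expn4 d) (INR_leq _).
  by apply: nair_bound (lcm_iota_gt0 N) _; apply/lcm_iotaP.
split=> //; apply: Rlt_le_trans (Rpower2_lt_expn2 lcm_gt) _.
exact/INR_leq/ratHeight_halfX.
Qed.
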